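(* For every $n\geq1$ and every $0<\alpha\leq 2$, $d_\alpha$ is a homogeneous distance on $\mathbb H^n$.
   Context: $\mathbb H^n=\mathbb R^{2n+1}=\{(x,y,z): x,y\in\mathbb R^n, z\in\mathbb R\}$ with the Euclidean topology and group law $(x,y,z)\cdot(x',y',z')=(x+x',y+y',z+z'+\tfrac12\langle x,y'\rangle-\tfrac12\langle y,x'\rangle)$. Dilations: $\delta_\lambda(x,y,z)=(\lambda x,\lambda y,\lambda^2 z)$. $B_\alpha$ is the closed Euclidean ball of radius $\alpha$ centered at $0$ in $\mathbb R^{2n+1}$, and $d_\alpha(p,q)=\inf\{r>0:\delta_{1/r}(p^{-1}\cdot q)\in B_\alpha\}$. A distance $d$ on $\mathbb H^n$ is homogeneous if it induces the Euclidean topology, is left invariant ($d(p\cdot q,p\cdot q')=d(q,q')$) and satisfies $d(\delta_\lambda p,\delta_\lambda q)=\lambda d(p,q)$ for all $\lambda>0$. *)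

From Stdlib Require Import Reals Lra Lia Arith ClassicalEpsilon.
Open Scope R_scope.

Definition Fin (n : nat) : Type := {i : nat | (i < n)%nat}.

Record Heis (n : nat) : Type := mkHeis {
  hx : Fin n -> R;
  hy : Fin n -> R;
  hz : R }.
Arguments mkHeis {n}.
Arguments hx {n}.
Arguments hy {n}.
Arguments hz {n}.

Definition ext {n : nat} (v : Fin n -> R) : nat -> R :=
  fun i => match lt_dec i n with
           | left h => v (exist _ i h)
           | right _ => 0
           end.

Fixpoint sumR (f : nat -> R) (k : nat) : R :=
  match k with
  | O => 0
  | S k' => sumR f k' + f k'
  end.

Definition inner {n : nat} (u v : Fin n -> R) : R :=
  sumR (fun i => ext u i * ext v i) n.

Definition hmul {n : nat} (p q : Heis n) : Heis n :=
  mkHeis (fun i => hx p i + hx q i)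
         (fun i => hy p i + hy q i)
         (hz p + hz q + / 2 * inner (hx p) (hy q) - / 2 * inner (hy p) (hx q)).

Definition hinv {n : nat} (p : Heis n) : Heis n :=
  mkHeis (fun i => - hx p i) (fun i => - hy p i) (- hz p).

Definition dil {n : nat} (l : R) (p : Heis n) : Heis n :=
  mkHeis (fun i => l * hx p i) (fun i => l * hy p i) (l ^ 2 * hz p).

Definition enorm {n : nat} (p : Heis n) : R :=
  sqrt (inner (hx p) (hx p) + inner (hy p) (hy p) + hz p ^ 2).

Definition edist {n : nat} (p q : Heis n) : R :=
  enorm (mkHeis (fun i => hx q i - hx p i) (fun i => hy q i - hy p i) (hz q - hz p)).

Definition Ball {n : nat} (a : R) (p : Heis n) : Prop := enorm p <= a.

Definition is_glb (E : R -> Prop) (m : R) : Prop :=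
  (forall x, E x -> m <= x) /\ (forall b, (forall x, E x -> b <= x) -> b <= m).

Definition Rinf (E : R -> Prop) : R :=
  epsilon (inhabits 0) (is_glb E).

Definition d_alpha (n : nat) (a : R) (p q : Heis n) : R :=
  Rinf (fun r => 0 < r /\ Ball a (dil (/ r) (hmul (hinv p) q))).

Definition is_distance {T : Type} (d : T -> T -> R) : Prop :=
  (forall p q, 0 <= d p q) /\
  (forall p q, d p q = 0 <-> p = q) /\
  (forall p q, d p q = d q p) /\
  (forall p q r, d p r <= d p q + d q r).

Definition open_for {T : Type} (d : T -> T -> R) (U : T -> Prop) : Prop :=
  forall p, U p -> exists eps, 0 < eps /\ forall q, d p q < eps -> U q.

Definition homogeneous_distance (n : nat) (d : Heis n -> Heis n -> R) : Prop :=
  is_distance d /\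
  (forall U : Heis n -> Prop, open_for d U <-> open_for (@edist n) U) /\
  (forall p q q', d (hmul p q) (hmul p q') = d q q') /\
  (forall l p q, 0 < l -> d (dil l p) (dil l q) = l * d p q).

From Stdlib Require Import Reals Lra Lia Psatz Arith.
From Stdlib Require Import Classical ClassicalEpsilon FunctionalExtensionality PropExtensionality.
Open Scope R_scope.

(* Since [d_alpha p q = N (p^-1 q)] for the gauge [N w = inf {r > 0 | dil (1/r) w in B_alpha}],
   left invariance and homogeneity hold because dilations are group automorphisms, and symmetry
   because [B_alpha] is stable under inversion.  The triangle inequality reduces to: for
   [u1, u2] in [B_alpha] and [s + t = 1], [s, t >= 0], the product [dil s u1 * dil t u2] lies in
   [B_alpha].  Its horizontal part has squared norm [s|h1|^2 + t|h2|^2 - st|h1 - h2|^2], its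
   vertical part is [s^2 z1 + t^2 z2 + st w(h1,h2)/2] with [w] the symplectic form, and
   [|w(h1,h2)| = |w(h1 - h2, h2)| <= |h1 - h2| |h2| <= 2|h1 - h2|] exactly because [alpha <= 2];
   convexity of the square then closes the estimate.  For the topology, [|w| <= alpha N(w)] and
   [N(w) <= r] as soon as [|w| <= alpha r^2] (for [r <= 1]), while [|p^-1 q|] and [|q - p|] are
   comparable with a constant depending only on [p]. *)

Lemma sumR_ext f g k : (forall i, (i < k)%nat -> f i = g i) -> sumR f k = sumR g k.
Proof. induction k as [|k IH]; intros H; cbn; [reflexivity|]. rewrite IH, H; auto. Qed.

Lemma sumR_add f g k : sumR (fun i => f i + g i) k = sumR f k + sumR g k.
Proof. induction k as [|k IH]; cbn; [lra|]. rewrite IH; lra. Qed.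

Lemma sumR_scal c f k : sumR (fun i => c * f i) k = c * sumR f k.
Proof. induction k as [|k IH]; cbn; [lra|]. rewrite IH; lra. Qed.

Lemma sumR_opp f k : sumR (fun i => - f i) k = - sumR f k.
Proof. induction k as [|k IH]; cbn; [lra|]. rewrite IH; lra. Qed.

Lemma sumR_ge0 f k : (forall i, 0 <= f i) -> 0 <= sumR f k.
Proof. intros Hf; induction k as [|k IH]; cbn; [lra|]. specialize (Hf k); lra. Qed.

Lemma sumR_ge_term f k i : (forall i, 0 <= f i) -> (i < k)%nat -> f i <= sumR f k.
Proof.
  intros Hf; induction k as [|k IH]; intros Hi; cbn; [lia|].
  destruct (Nat.eq_dec i k) as [->|Hik].
  - pose proof (sumR_ge0 f k Hf); lra.
  - specialize (IH ltac:(lia)); specialize (Hf k); lra.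
Qed.

Section InnerProduct.
Context {n : nat}.
Implicit Types u v w : Fin n -> R.

Lemma ext_add u v i : ext (fun j => u j + v j) i = ext u i + ext v i.
Proof. unfold ext; destruct lt_dec; lra. Qed.

Lemma ext_opp u i : ext (fun j => - u j) i = - ext u i.
Proof. unfold ext; destruct lt_dec; lra. Qed.

Lemma ext_scal c u i : ext (fun j => c * u j) i = c * ext u i.
Proof. unfold ext; destruct lt_dec; lra. Qed.

Lemma inner_addl u v w : inner (fun j => u j + v j) w = inner u w + inner v w.
Proof. unfold inner; rewrite <- sumR_add; apply sumR_ext; intros; rewrite ext_add; ring. Qed.

Lemma inner_addr u v w : inner w (fun j => u j + v j) = inner w u + inner w v.
Proof. unfold inner; rewrite <- sumR_add; apply sumR_ext; intros; rewrite ext_add; ring. Qed.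

Lemma inner_oppl u w : inner (fun j => - u j) w = - inner u w.
Proof. unfold inner; rewrite <- sumR_opp; apply sumR_ext; intros; rewrite ext_opp; ring. Qed.

Lemma inner_oppr u w : inner w (fun j => - u j) = - inner w u.
Proof. unfold inner; rewrite <- sumR_opp; apply sumR_ext; intros; rewrite ext_opp; ring. Qed.

Lemma inner_scall c u w : inner (fun j => c * u j) w = c * inner u w.
Proof. unfold inner; rewrite <- sumR_scal; apply sumR_ext; intros; rewrite ext_scal; ring. Qed.

Lemma inner_scalr c u w : inner w (fun j => c * u j) = c * inner w u.
Proof. unfold inner; rewrite <- sumR_scal; apply sumR_ext; intros; rewrite ext_scal; ring. Qed.

Lemma inner_0r u : inner u (fun _ => 0) = 0.
Proof.
  unfold inner; transitivity (sumR (fun i => 0 * ext u i) n).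
  - apply sumR_ext; intros; unfold ext at 2; destruct lt_dec; ring.
  - rewrite sumR_scal; ring.
Qed.

Lemma inner_sym u v : inner u v = inner v u.
Proof. unfold inner; apply sumR_ext; intros; ring. Qed.

Lemma inner_0l u : inner (fun _ => 0) u = 0.
Proof. rewrite inner_sym; apply inner_0r. Qed.

Lemma inner_ge0 u : 0 <= inner u u.
Proof. unfold inner; apply sumR_ge0; intros; nra. Qed.

Lemma inner_eq0 u : inner u u = 0 -> forall j, u j = 0.
Proof.
  intros Hu [i Hi].
  assert (Hterm : ext u i * ext u i <= inner u u)
    by (apply (sumR_ge_term (fun i => ext u i * ext u i)); auto; intros; nra).
  unfold ext in Hterm; destruct lt_dec as [Hi'|]; [|lia].
  rewrite (le_unique _ _ Hi' Hi) in Hterm; nra.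
Qed.

End InnerProduct.

Definition hone (n : nat) : Heis n := mkHeis (fun _ => 0) (fun _ => 0) 0.

Definition horiz2 {n} (p : Heis n) : R := inner (hx p) (hx p) + inner (hy p) (hy p).

Definition omega {n} (p q : Heis n) : R := inner (hx p) (hy q) - inner (hy p) (hx q).

Ltac inner_expand :=
  unfold horiz2, omega in *; cbn [hmul hinv dil hone hx hy hz] in *; unfold Rminus in *;
  repeat first [ rewrite inner_addl in * | rewrite inner_addr in * | rewrite inner_oppl in *
               | rewrite inner_oppr in * | rewrite inner_scall in * | rewrite inner_scalr in *
               | rewrite inner_0l in * | rewrite inner_0r in * ].

Ltac inner_sym_yx :=
  repeat match goal with
         | |- context [inner (hy ?p) (hx ?q)] => rewrite (inner_sym (hy p) (hx q))
         end.

Section HeisGroup.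
Context {n : nat}.
Implicit Types p q r w : Heis n.

Lemma heis_ext p q :
  (forall i, hx p i = hx q i) -> (forall i, hy p i = hy q i) -> hz p = hz q -> p = q.
Proof.
  destruct p as [xp yp zp], q as [xq yq zq]; cbn; intros Hx Hy ->.
  f_equal; apply functional_extensionality; assumption.
Qed.

Ltac heis_law := apply heis_ext; intros; inner_expand; inner_sym_yx; ring.

Lemma hmulA p q r : hmul (hmul p q) r = hmul p (hmul q r).
Proof. heis_law. Qed.

Lemma hmul1 p : hmul p (hone n) = p.
Proof. heis_law. Qed.

Lemma hmulVh p : hmul (hinv p) p = hone n.
Proof. heis_law. Qed.

Lemma hmulK p q : hmul (hinv p) (hmul p q) = q.
Proof. heis_law. Qed.

Lemma hmulKV p q : hmul p (hmul (hinv p) q) = q.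
Proof. heis_law. Qed.

Lemma hinvM p q : hinv (hmul p q) = hmul (hinv q) (hinv p).
Proof. heis_law. Qed.

Lemma hinvK p : hinv (hinv p) = p.
Proof. heis_law. Qed.

Lemma dilM l p q : dil l (hmul p q) = hmul (dil l p) (dil l q).
Proof. heis_law. Qed.

Lemma dilV l p : dil l (hinv p) = hinv (dil l p).
Proof. heis_law. Qed.

Lemma dil_dil l m p : dil l (dil m p) = dil (l * m) p.
Proof. heis_law. Qed.

Lemma dil1 l : dil l (hone n) = hone n.
Proof. heis_law. Qed.

Lemma dil_1 p : dil 1 p = p.
Proof. heis_law. Qed.

End HeisGroup.

Lemma discriminant_le A B C :
  0 <= A -> (forall t, 0 <= A * t ^ 2 + 2 * B * t + C) -> B ^ 2 <= A * C.
Proof.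
  intros HA Hq; destruct (Req_dec A 0) as [->|HA0].
  - destruct (Req_dec B 0) as [->|HB0]; [lra|].
    specialize (Hq (- (C + 1) / (2 * B))).
    replace (2 * B * (- (C + 1) / (2 * B))) with (- (C + 1)) in Hq by (field; lra); lra.
  - specialize (Hq (- B / A)).
    replace (A * (- B / A) ^ 2 + 2 * B * (- B / A) + C) with (C - B ^ 2 / A) in Hq by (field; lra).
    assert (HBA : B ^ 2 / A <= C) by lra.
    apply Rmult_le_compat_l with (r := A) in HBA; [|lra].
    replace (A * (B ^ 2 / A)) with (B ^ 2) in HBA by (field; lra); lra.
Qed.

Section Horizontal.
Context {n : nat}.
Implicit Types p q : Heis n.

Lemma horiz2_ge0 p : 0 <= horiz2 p.
Proof. pose proof (inner_ge0 (hx p)); pose proof (inner_ge0 (hy p)); unfold horiz2; lra. Qed.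

Lemma omega_sq_le p q : omega p q ^ 2 <= horiz2 q * horiz2 p.
Proof.
  (* [t |-> |(x_p + t y_q, y_p - t x_q)|^2] is a nonnegative quadratic with middle coefficient [omega p q]. *)
  apply discriminant_le; [apply horiz2_ge0|intros t].
  pose proof (horiz2_ge0 (mkHeis (fun i => hx p i + t * hy q i) (fun i => hy p i - t * hx q i) 0)) as H.
  inner_expand; rewrite (inner_sym (hy q) (hx p)), (inner_sym (hx q) (hy p)) in H; nra.
Qed.

End Horizontal.

Lemma sq_convex s t x y :
  0 <= s -> 0 <= t -> s + t = 1 -> (s * x + t * y) ^ 2 <= s * x ^ 2 + t * y ^ 2.
Proof.
  intros Hs Ht Hst.
  assert (E : s * x ^ 2 + t * y ^ 2 - (s * x + t * y) ^ 2 = s * t * (x - y) ^ 2)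
    by (replace t with (1 - s) by lra; ring).
  assert (0 <= s * t * (x - y) ^ 2) by (apply Rmult_le_pos; [nra|apply pow2_ge_0]).
  lra.
Qed.

Lemma sq_convex_mix s t x y d : 0 <= s -> 0 <= t -> s + t = 1 ->
  (s ^ 2 * x + t ^ 2 * y + s * t * d) ^ 2 <= s * x ^ 2 + t * y ^ 2 + s * t * d ^ 2.
Proof.
  intros Hs Ht Hst.
  replace (s ^ 2 * x + t ^ 2 * y + s * t * d)
    with (s * (s * x + t * (d / 2)) + t * (t * y + s * (d / 2))) by field.
  eapply Rle_trans; [apply sq_convex; auto|].
  pose proof (sq_convex s t x (d / 2) Hs Ht Hst) as Hx.
  pose proof (sq_convex t s y (d / 2) Ht Hs ltac:(lra)) as Hy.
  apply Rmult_le_compat_l with (r := s) in Hx; [|lra].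
  apply Rmult_le_compat_l with (r := t) in Hy; [|lra].
  assert (0 <= s * t * (x ^ 2 + y ^ 2 + d ^ 2 / 2)).
  { apply Rmult_le_pos; [nra|]. pose proof (pow2_ge_0 x); pose proof (pow2_ge_0 y);
    pose proof (pow2_ge_0 d); lra. }
  replace t with (1 - s) in * by lra; nra.
Qed.

Lemma convex_ball_ineq a s t A1 A2 D z1 z2 o :
  0 <= s -> 0 <= t -> s + t = 1 -> 0 <= a <= 2 -> 0 <= D ->
  A1 + z1 ^ 2 <= a ^ 2 -> A2 + z2 ^ 2 <= a ^ 2 -> o ^ 2 <= D * A2 ->
  s * A1 + t * A2 - s * t * D + (s ^ 2 * z1 + t ^ 2 * z2 + s * t * (o / 2)) ^ 2 <= a ^ 2.
Proof.
  intros Hs Ht Hst Ha HD H1 H2 Ho.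
  pose proof (sq_convex_mix s t z1 z2 (o / 2) Hs Ht Hst) as Hmix.
  assert (HA2 : A2 <= 4) by (pose proof (pow2_ge_0 z2); nra).
  assert (Hod : (o / 2) ^ 2 <= D).
  { assert (D * A2 <= D * 4) by (apply Rmult_le_compat_l; lra).
    replace ((o / 2) ^ 2) with (o ^ 2 / 4) by field; lra. }
  assert (s * t * (o / 2) ^ 2 <= s * t * D) by (apply Rmult_le_compat_l; nra).
  assert (s * (A1 + z1 ^ 2) + t * (A2 + z2 ^ 2) <= s * a ^ 2 + t * a ^ 2).
  { apply Rplus_le_compat; apply Rmult_le_compat_l; lra. }
  replace (s * a ^ 2 + t * a ^ 2) with (a ^ 2) in * by (replace t with (1 - s) by lra; ring).
  lra.
Qed.

Section Ball.
Context {n : nat}.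
Implicit Types p u w : Heis n.

Lemma enorm_le_iff c p : 0 <= c -> enorm p <= c <-> horiz2 p + hz p ^ 2 <= c ^ 2.
Proof.
  intros Hc; unfold enorm; fold (horiz2 p).
  assert (0 <= horiz2 p + hz p ^ 2) by (pose proof (horiz2_ge0 p); pose proof (pow2_ge_0 (hz p)); lra).
  rewrite <- (sqrt_pow2 c Hc) at 1; split.
  - apply sqrt_le_0; auto using pow2_ge_0.
  - apply sqrt_le_1_alt.
Qed.

Lemma enorm_sq p : enorm p ^ 2 = horiz2 p + hz p ^ 2.
Proof.
  unfold enorm; fold (horiz2 p); apply pow2_sqrt.
  pose proof (horiz2_ge0 p); pose proof (pow2_ge_0 (hz p)); lra.
Qed.

Lemma enorm_ge0 p : 0 <= enorm p.
Proof. apply sqrt_pos. Qed.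

Lemma horiz2_dil l p : horiz2 (dil l p) = l ^ 2 * horiz2 p.
Proof. inner_expand; ring. Qed.

Lemma enorm_dil_le l p : 0 <= l <= 1 -> enorm (dil l p) <= l * enorm p.
Proof.
  intros Hl; apply enorm_le_iff; [pose proof (enorm_ge0 p); nra|].
  rewrite Rpow_mult_distr, enorm_sq, horiz2_dil; cbn [dil hz].
  assert (Hl2 : 0 <= l ^ 2 <= 1) by (split; [apply pow2_ge_0|nra]).
  assert (l ^ 2 * l ^ 2 * hz p ^ 2 <= l ^ 2 * hz p ^ 2).
  { apply Rmult_le_compat_r; [apply pow2_ge_0|nra]. }
  replace ((l ^ 2 * hz p) ^ 2) with (l ^ 2 * l ^ 2 * hz p ^ 2) by ring; lra.
Qed.

Lemma enorm_dil_ge1 l p : 1 <= l -> enorm (dil l p) <= l ^ 2 * enorm p.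
Proof.
  intros Hl; apply enorm_le_iff; [apply Rmult_le_pos; auto using pow2_ge_0, enorm_ge0|].
  rewrite Rpow_mult_distr, enorm_sq, horiz2_dil; cbn [dil hz].
  assert (Hl2 : 1 <= l ^ 2) by nra.
  assert (l ^ 2 * horiz2 p <= l ^ 2 * l ^ 2 * horiz2 p).
  { apply Rmult_le_compat_r; [apply horiz2_ge0|nra]. }
  replace ((l ^ 2 * hz p) ^ 2) with (l ^ 2 * l ^ 2 * hz p ^ 2) by ring.
  replace ((l ^ 2) ^ 2) with (l ^ 2 * l ^ 2) by ring; lra.
Qed.

Lemma enorm_hinv p : enorm (hinv p) = enorm p.
Proof. unfold enorm; inner_expand; f_equal; ring. Qed.

Lemma enorm_hone : enorm (hone n) = 0.
Proof.
  unfold enorm; inner_expand.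
  match goal with |- sqrt ?x = 0 => replace x with 0 by ring end; apply sqrt_0.
Qed.

Lemma enorm_eq0 p : enorm p = 0 -> p = hone n.
Proof.
  intros H0; pose proof (enorm_sq p) as Hsq; rewrite H0 in Hsq.
  pose proof (inner_ge0 (hx p)); pose proof (inner_ge0 (hy p)); pose proof (pow2_ge_0 (hz p)).
  unfold horiz2 in Hsq.
  apply heis_ext; cbn; intros.
  - apply inner_eq0; lra.
  - apply inner_eq0; lra.
  - destruct (Req_dec (hz p) 0) as [|Hz]; [assumption|].
    exfalso; apply (pow_nonzero _ 2 Hz); lra.
Qed.

Lemma Ball_mul_dil a s t u1 u2 : 0 <= a <= 2 -> 0 <= s -> 0 <= t -> s + t = 1 ->
  Ball a u1 -> Ball a u2 -> Ball a (hmul (dil s u1) (dil t u2)).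
Proof.
  unfold Ball; intros Ha Hs Ht Hst H1 H2; rewrite enorm_le_iff in * by lra.
  set (h := mkHeis (fun i => hx u1 i - hx u2 i) (fun i => hy u1 i - hy u2 i) 0 : Heis n).
  assert (Homega : omega u1 u2 ^ 2 <= horiz2 h * horiz2 u2).
  { replace (omega u1 u2) with (omega h u2) by (unfold h; inner_expand; inner_sym_yx; ring).
    rewrite Rmult_comm; apply omega_sq_le. }
  assert (Hhoriz : horiz2 (hmul (dil s u1) (dil t u2))
                   = s * horiz2 u1 + t * horiz2 u2 - s * t * horiz2 h).
  { unfold h; inner_expand.
    rewrite (inner_sym (hx u2) (hx u1)), (inner_sym (hy u2) (hy u1)).
    replace t with (1 - s) by lra; ring. }
  assert (Hvert : hz (hmul (dil s u1) (dil t u2))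
                  = s ^ 2 * hz u1 + t ^ 2 * hz u2 + s * t * (omega u1 u2 / 2)).
  { unfold omega; cbn [hmul dil hx hy hz]; rewrite !inner_scall, !inner_scalr; field. }
  rewrite Hhoriz, Hvert.
  apply convex_ball_ineq; auto using horiz2_ge0.
Qed.

End Ball.

Lemma is_glb_unique E m1 m2 : is_glb E m1 -> is_glb E m2 -> m1 = m2.
Proof. intros [H1 H2] [H3 H4]; apply Rle_antisym; auto. Qed.

Lemma Rinf_of_glb E m : is_glb E m -> Rinf E = m.
Proof. intros Hm; apply (is_glb_unique E); [unfold Rinf; apply epsilon_spec|]; eauto. Qed.

Lemma Rinf_ext E F : (forall r, E r <-> F r) -> Rinf E = Rinf F.
Proof.
  intros HEF; f_equal; apply functional_extensionality; intros r.
  apply propositional_extensionality, HEF.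
Qed.

Lemma is_glb_scale E m l : 0 < l -> is_glb E m -> is_glb (fun r => E (r / l)) (l * m).
Proof.
  intros Hl [Hlow Hgreat]; split.
  - intros x Hx; specialize (Hlow _ Hx).
    apply Rmult_le_compat_l with (r := l) in Hlow; [|lra].
    replace (l * (x / l)) with x in Hlow by (field; lra); exact Hlow.
  - intros b Hb.
    assert (Hbl : b / l <= m).
    { apply Hgreat; intros y Hy.
      assert (Hly : b <= l * y) by (apply Hb; replace (l * y / l) with y by (field; lra); exact Hy).
      apply Rmult_le_reg_l with l; [lra|]. replace (l * (b / l)) with b by (field; lra); exact Hly. }
    apply Rmult_le_compat_l with (r := l) in Hbl; [|lra].
    replace (l * (b / l)) with b in Hbl by (field; lra); exact Hbl.
Qed.

Section UpwardClosedSet.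
Variable E : R -> Prop.
Hypothesis E_pos : forall r, E r -> 0 < r.
Hypothesis E_inhabited : exists r, E r.
Hypothesis E_up : forall r r', E r -> r <= r' -> E r'.

Lemma Rinf_is_glb : is_glb E (Rinf E).
Proof.
  unfold Rinf; apply epsilon_spec.
  destruct E_inhabited as [x0 Hx0].
  destruct (completeness (fun x => E (- x))) as [m [Hub Hleast]].
  - exists 0; intros y Hy; specialize (E_pos _ Hy); lra.
  - exists (- x0); rewrite Ropp_involutive; exact Hx0.
  - exists (- m); split.
    + intros x Hx; enough (- x <= m) by lra.
      apply Hub; rewrite Ropp_involutive; exact Hx.
    + intros b Hb; enough (m <= - b) by lra.
      apply Hleast; intros y Hy; specialize (Hb _ Hy); lra.
Qed.

Lemma Rinf_ge0 : 0 <= Rinf E.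
Proof. apply Rinf_is_glb; intros x Hx; specialize (E_pos _ Hx); lra. Qed.

Lemma Rinf_le r : E r -> Rinf E <= r.
Proof. apply Rinf_is_glb. Qed.

Lemma Rinf_lt_mem r : Rinf E < r -> E r.
Proof.
  intros Hr; apply NNPP; intros HnE.
  enough (r <= Rinf E) by lra.
  apply Rinf_is_glb; intros x Hx.
  destruct (Rle_dec x r) as [Hxr|]; [exfalso; eauto|lra].
Qed.

End UpwardClosedSet.

Definition gauge_set {n} (a : R) (w : Heis n) (r : R) : Prop := 0 < r /\ Ball a (dil (/ r) w).

Definition gauge {n} (a : R) (w : Heis n) : R := Rinf (gauge_set a w).

Lemma d_alpha_gauge n a (p q : Heis n) : d_alpha n a p q = gauge a (hmul (hinv p) q).
Proof. reflexivity. Qed.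

Section Gauge.
Context {n : nat} (a : R).
Hypothesis a_pos : 0 < a.
Implicit Types w : Heis n.

Lemma gauge_set_pos w r : gauge_set a w r -> 0 < r.
Proof. intros [Hr _]; exact Hr. Qed.

Lemma gauge_set_up w r r' : gauge_set a w r -> r <= r' -> gauge_set a w r'.
Proof.
  intros [Hr Hball] Hrr'; split; [lra|].
  assert (Hq : 0 <= r / r' <= 1).
  { split; [apply Rlt_le, Rdiv_lt_0_compat; lra|].
    apply Rmult_le_reg_r with r'; [lra|]; replace (r / r' * r') with r by (field; lra); lra. }
  replace (dil (/ r') w) with (dil (r / r') (dil (/ r) w)) by (rewrite dil_dil; f_equal; field; lra).
  unfold Ball in *; eapply Rle_trans; [apply enorm_dil_le, Hq|].
  pose proof (enorm_ge0 (dil (/ r) w)); nra.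
Qed.

Lemma gauge_set_inhabited w : exists r, gauge_set a w r.
Proof.
  pose proof (enorm_ge0 w) as Hw.
  set (r := 1 + enorm w / a).
  assert (Hr1 : 1 <= r).
  { assert (0 <= enorm w / a) by (apply Rmult_le_pos; [lra|apply Rlt_le, Rinv_0_lt_compat; lra]).
    unfold r; lra. }
  exists r; split; [lra|].
  unfold Ball; eapply Rle_trans.
  { apply enorm_dil_le; split; [apply Rlt_le, Rinv_0_lt_compat; lra|].
    rewrite <- Rinv_1; apply Rinv_le_contravar; lra. }
  apply Rmult_le_reg_l with r; [lra|].
  rewrite <- Rmult_assoc, Rinv_r, Rmult_1_l; [|lra].
  unfold r; replace ((1 + enorm w / a) * a) with (a + enorm w) by (field; lra); lra.
Qed.

Lemma gauge_ge0 w : 0 <= gauge a w.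
Proof. apply Rinf_ge0; [apply gauge_set_pos|apply gauge_set_inhabited]. Qed.

Lemma gauge_le w r : gauge_set a w r -> gauge a w <= r.
Proof. apply Rinf_le; [apply gauge_set_pos|apply gauge_set_inhabited]. Qed.

Lemma gauge_lt_set w r : gauge a w < r -> gauge_set a w r.
Proof. apply Rinf_lt_mem; [apply gauge_set_pos|apply gauge_set_inhabited|apply gauge_set_up]. Qed.

Lemma gauge_le_of_enorm w r : 0 < r <= 1 -> enorm w <= a * r ^ 2 -> gauge a w <= r.
Proof.
  intros Hr Hw; apply gauge_le; split; [lra|].
  unfold Ball; eapply Rle_trans; [apply enorm_dil_ge1|].
  - rewrite <- Rinv_1; apply Rinv_le_contravar; lra.
  - apply Rmult_le_compat_l with (r := (/ r) ^ 2) in Hw; [|apply pow2_ge_0].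
    replace ((/ r) ^ 2 * (a * r ^ 2)) with a in Hw by (field; lra); exact Hw.
Qed.

Lemma enorm_le_of_gauge_lt w r : 0 < r <= 1 -> gauge a w < r -> enorm w <= a * r.
Proof.
  intros Hr Hw; destruct (gauge_lt_set w r Hw) as [_ Hball].
  replace w with (dil r (dil (/ r) w)) by (rewrite dil_dil, Rinv_r by lra; apply dil_1).
  eapply Rle_trans; [apply enorm_dil_le; lra|].
  rewrite Rmult_comm; apply Rmult_le_compat_r; [lra|exact Hball].
Qed.

Lemma gauge_eq0 w : gauge a w = 0 <-> w = hone n.
Proof.
  split.
  - intros H0; apply enorm_eq0, Rle_antisym; [|apply enorm_ge0].
    apply Rle_plus_epsilon; intros eps Heps; rewrite Rplus_0_l.
    set (r := Rmin 1 (eps / a)).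
    assert (Hr : 0 < r <= 1).
    { split; [apply Rmin_glb_lt; [lra|apply Rdiv_lt_0_compat; lra]|apply Rmin_l]. }
    eapply Rle_trans; [apply (enorm_le_of_gauge_lt w r); lra|].
    apply Rmult_le_reg_l with (/ a); [apply Rinv_0_lt_compat; lra|].
    rewrite <- Rmult_assoc, Rinv_l, Rmult_1_l by lra.
    rewrite Rmult_comm; apply Rmin_r.
  - intros ->; apply Rle_antisym; [|apply gauge_ge0].
    apply Rle_plus_epsilon; intros eps Heps; rewrite Rplus_0_l.
    apply gauge_le; split; [lra|].
    unfold Ball; rewrite dil1, enorm_hone; lra.
Qed.

Lemma gauge_hinv w : gauge a (hinv w) = gauge a w.
Proof.
  apply Rinf_ext; intros r; unfold gauge_set, Ball.
  rewrite dilV, enorm_hinv; tauto.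
Qed.

Lemma gauge_dil l w : 0 < l -> gauge a (dil l w) = l * gauge a w.
Proof.
  intros Hl; unfold gauge at 1.
  rewrite (Rinf_ext _ (fun r => gauge_set a w (r / l))).
  - apply Rinf_of_glb, is_glb_scale; [exact Hl|].
    apply Rinf_is_glb; [apply gauge_set_pos|apply gauge_set_inhabited].
  - intros r; unfold gauge_set; rewrite dil_dil.
    split; intros [Hr Hball]; split.
    + apply Rdiv_lt_0_compat; lra.
    + replace (/ (r / l)) with (/ r * l) by (field; lra); exact Hball.
    + replace r with (r / l * l) by (field; lra); apply Rmult_lt_0_compat; lra.
    + assert (0 < r) by (replace r with (r / l * l) by (field; lra); apply Rmult_lt_0_compat; lra).
      replace (/ r * l) with (/ (r / l)) by (field; lra); exact Hball.
Qed.

Lemma gauge_mul_le w1 w2 : a <= 2 -> gauge a (hmul w1 w2) <= gauge a w1 + gauge a w2.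
Proof.
  intros Ha2; apply Rle_plus_epsilon; intros eps Heps.
  set (r1 := gauge a w1 + eps / 2); set (r2 := gauge a w2 + eps / 2).
  destruct (gauge_lt_set w1 r1) as [Hr1 Hball1]; [unfold r1; lra|].
  destruct (gauge_lt_set w2 r2) as [Hr2 Hball2]; [unfold r2; lra|].
  replace (gauge a w1 + gauge a w2 + eps) with (r1 + r2) by (unfold r1, r2; field).
  apply gauge_le; split; [lra|].
  replace (dil (/ (r1 + r2)) (hmul w1 w2))
    with (hmul (dil (r1 / (r1 + r2)) (dil (/ r1) w1)) (dil (r2 / (r1 + r2)) (dil (/ r2) w2)))
    by (rewrite dilM, !dil_dil; f_equal; f_equal; field; lra).
  apply Ball_mul_dil; auto; try (apply Rlt_le, Rdiv_lt_0_compat; lra); [lra|field; lra].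
Qed.

End Gauge.

Section EuclideanComparison.
Context {n : nat}.
Implicit Types p q v : Heis n.

Lemma enorm_shift_le v v' o B :
  hx v' = hx v -> hy v' = hy v -> hz v' = hz v + o / 2 -> 0 <= B -> o ^ 2 <= B * horiz2 v ->
  enorm v' <= sqrt (2 + B) * enorm v.
Proof.
  intros Hx Hy Hz HB Ho.
  apply enorm_le_iff; [apply Rmult_le_pos; apply sqrt_pos|].
  rewrite Rpow_mult_distr, pow2_sqrt, enorm_sq by lra.
  assert (Hh : horiz2 v' = horiz2 v) by (unfold horiz2; rewrite Hx, Hy; reflexivity).
  rewrite Hh, Hz.
  pose proof (horiz2_ge0 v); pose proof (pow2_ge_0 (hz v)).
  assert ((hz v + o / 2) ^ 2 <= 2 * hz v ^ 2 + o ^ 2 / 2) by (pose proof (pow2_ge_0 (hz v - o / 2)); nra).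
  assert (0 <= B * hz v ^ 2) by (apply Rmult_le_pos; lra).
  nra.
Qed.

Lemma edist_le_enorm p q : edist p q <= sqrt (2 + horiz2 p) * enorm (hmul (hinv p) q).
Proof.
  apply enorm_shift_le with (omega p (hmul (hinv p) q)); auto using horiz2_ge0.
  - apply functional_extensionality; intros; cbn; ring.
  - apply functional_extensionality; intros; cbn; ring.
  - inner_expand; inner_sym_yx; field.
  - rewrite Rmult_comm; apply omega_sq_le.
Qed.

Lemma enorm_le_edist p q : enorm (hmul (hinv p) q) <= sqrt (2 + horiz2 p) * edist p q.
Proof.
  unfold edist.
  set (v := mkHeis (fun i => hx q i - hx p i) (fun i => hy q i - hy p i) (hz q - hz p) : Heis n).
  apply enorm_shift_le with (- omega p v); auto using horiz2_ge0.
  - apply functional_extensionality; intros; cbn; ring.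
  - apply functional_extensionality; intros; cbn; ring.
  - unfold v; inner_expand; inner_sym_yx; field.
  - replace ((- omega p v) ^ 2) with (omega p v ^ 2) by ring.
    rewrite Rmult_comm; apply omega_sq_le.
Qed.

End EuclideanComparison.

Lemma open_for_of_local {T} (d1 d2 : T -> T -> R) :
  (forall p eps, 0 < eps -> exists eta, 0 < eta /\ forall q, d2 p q < eta -> d1 p q < eps) ->
  forall U, open_for d1 U -> open_for d2 U.
Proof.
  intros Hloc U HU p Hp.
  destruct (HU p Hp) as [eps [Heps HUeps]].
  destruct (Hloc p eps Heps) as [eta [Heta Hclose]].
  exists eta; split; auto.
Qed.

Section DAlpha.
Context (n : nat) (a : R).
Hypothesis a_pos : 0 < a.
Implicit Types p q : Heis n.

Lemma sqrt_2_add_horiz2_gt0 p : 0 < sqrt (2 + horiz2 p).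
Proof. apply sqrt_lt_R0; pose proof (horiz2_ge0 p); lra. Qed.

Lemma d_alpha_small_of_edist_small p eps : 0 < eps ->
  exists eta, 0 < eta /\ forall q, edist p q < eta -> d_alpha n a p q < eps.
Proof.
  intros Heps; pose proof (sqrt_2_add_horiz2_gt0 p) as HK.
  set (K := sqrt (2 + horiz2 p)) in *.
  set (r := Rmin 1 (eps / 2)).
  assert (Hr : 0 < r <= 1) by (split; [apply Rmin_glb_lt; lra|apply Rmin_l]).
  assert (Hreps : r < eps) by (unfold r; pose proof (Rmin_r 1 (eps / 2)); lra).
  exists (a * r ^ 2 / K); split.
  { apply Rdiv_lt_0_compat; [apply Rmult_lt_0_compat; [|apply pow_lt]|]; lra. }
  intros q Hq; rewrite d_alpha_gauge.
  enough (gauge a (hmul (hinv p) q) <= r) by lra.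
  apply gauge_le_of_enorm; [exact a_pos|exact Hr|].
  eapply Rle_trans; [apply enorm_le_edist|]; fold K.
  apply Rmult_lt_compat_l with (r := K) in Hq; [|exact HK].
  replace (K * (a * r ^ 2 / K)) with (a * r ^ 2) in Hq by (field; lra); lra.
Qed.

Lemma edist_small_of_d_alpha_small p eps : 0 < eps ->
  exists eta, 0 < eta /\ forall q, d_alpha n a p q < eta -> edist p q < eps.
Proof.
  intros Heps; pose proof (sqrt_2_add_horiz2_gt0 p) as HK.
  set (K := sqrt (2 + horiz2 p)) in *.
  set (eta := Rmin 1 (eps / (2 * K * a))).
  assert (HKa : 0 < 2 * K * a) by (apply Rmult_lt_0_compat; lra).
  assert (Heta : 0 < eta <= 1) by (split; [apply Rmin_glb_lt; [lra|apply Rdiv_lt_0_compat; lra]|apply Rmin_l]).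
  exists eta; split; [lra|].
  intros q Hq; rewrite d_alpha_gauge in Hq.
  pose proof (enorm_le_of_gauge_lt a a_pos _ _ Heta Hq) as Hw.
  eapply Rle_lt_trans; [apply edist_le_enorm|]; fold K.
  assert (HKaeta : K * a * eta <= eps / 2).
  { apply Rmult_le_reg_l with 2; [lra|].
    replace (2 * (eps / 2)) with (2 * K * a * (eps / (2 * K * a))) by (field; lra).
    replace (2 * (K * a * eta)) with (2 * K * a * eta) by ring.
    apply Rmult_le_compat_l; [lra|apply Rmin_r]. }
  apply Rmult_le_compat_l with (r := K) in Hw; [|lra].
  lra.
Qed.

End DAlpha.

Lemma d_alpha_is_distance n a : 0 < a <= 2 -> is_distance (d_alpha n a).
Proof.
  intros Ha; split; [|split; [|split]]; intros p q; rewrite ?d_alpha_gauge.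
  - apply gauge_ge0; lra.
  - rewrite gauge_eq0 by lra; split.
    + intros Hpq; rewrite <- (hmulKV p q), Hpq, hmul1; reflexivity.
    + intros <-; apply hmulVh.
  - rewrite <- gauge_hinv, hinvM, hinvK by lra; reflexivity.
  - intros r; rewrite !d_alpha_gauge.
    replace (hmul (hinv p) r) with (hmul (hmul (hinv p) q) (hmul (hinv q) r))
      by (rewrite hmulA, hmulKV; reflexivity).
    apply gauge_mul_le; lra.
Qed.

Lemma d_alpha_left_invariant n a (p q q' : Heis n) :
  d_alpha n a (hmul p q) (hmul p q') = d_alpha n a q q'.
Proof. rewrite !d_alpha_gauge, hinvM, hmulA, hmulK; reflexivity. Qed.

Lemma d_alpha_dil n a l (p q : Heis n) : 0 < a -> 0 < l ->
  d_alpha n a (dil l p) (dil l q) = l * d_alpha n a p q.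
Proof. intros Ha Hl; rewrite !d_alpha_gauge, <- dilV, <- dilM; apply gauge_dil; assumption. Qed.

Theorem mainTheorem2 :
  forall (n : nat), (1 <= n)%nat ->
  forall (a : R), 0 < a <= 2 ->
  homogeneous_distance n (d_alpha n a).
Proof.
  intros n _ a Ha.
  split; [|split; [|split]].
  - apply d_alpha_is_distance; exact Ha.
  - intros U; split; apply open_for_of_local; intros p eps Heps.
    + apply d_alpha_small_of_edist_small; lra.
    + apply edist_small_of_d_alpha_small; lra.
  - apply d_alpha_left_invariant.
  - intros l p q Hl; apply d_alpha_dil; lra.
Qed.
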